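(* Let $D\ge 3$, let $n,p\ge 0$ with $n+p\ge 2$, and let $N_1,\dots,N_n,M_1,\dots,M_p\ge0$ be integers. For $P_a\in\mathcal{H}^{(D)}_{N_a}$ and $Q_b\in\mathcal{H}^{(D)}_{M_b}$ define $$I_{n,p}(P_1,\dots,P_n,\bar Q_1,\dots,\bar Q_p)=\int_{S^{D-1}}d\Omega(x)\,P_1(x)\cdots P_n(x)\,\bar Q_1(x)\cdots\bar Q_p(x),$$ where $d\Omega$ is the rotation-invariant probability measure on the unit sphere $S^{D-1}\subset\mathbb{R}^D$. Write the arguments as $F_1,\dots,F_{n+p}$ (so $F_a=P_a$ for $a\le n$ and $F_{n+b}=\bar Q_b$). Then $I_{n,p}$ is a simple intertwiner: for any two distinct positions $a\neq b$ in $\{1,\dots,n+p\}$ and all $i,j,k,l\in\{1,\dots,D\}$, $$\sum_{\text{antisym. over }(i,j,k,l)} I_{n,p}\big(F_1,\dots,X_{ij}\cdot F_a,\dots,X_{kl}\cdot F_b,\dots,F_{n+p}\big)=0,$$ i.e. $I_{n,p}(\dots,X_{[ij}\cdot F_a,\dots,X_{kl]}\cdot F_b,\dots)=0$, where $X_{ij}$ is applied in position $a$, $X_{kl}$ in position $b$, and all other arguments are unchanged.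
   Context: $\mathcal{H}^{(D)}_N$ is the space of complex-valued harmonic homogeneous polynomials of degree $N$ on $\mathbb{R}^D$, a representation of $\mathrm{SO}(D)$ via $(g\cdot P)(x)=P(g^{-1}x)$. The Lie algebra generators $X_{ij}$ of $\mathfrak{so}(D)$ act on functions on $\mathbb{R}^D$ (including the complex conjugates $\bar Q$) by the differential operators $X_{ij}\cdot f=x_i\,\partial f/\partial x_j-x_j\,\partial f/\partial x_i$. $[ijkl]$ denotes total antisymmetrization over the four indices. (The $P_a$ correspond to incoming and the $Q_b$ to outgoing edges at a vertex of an $\mathrm{SO}(D)$ spin network; the displayed condition is the quantum intersection constraint.) *)

From HB Require Import structures.
From mathcomp Require Import all_boot all_order all_algebra all_fingroup.
From mathcomp Require Import mpoly.
From mathcomp Require Import all_classical all_reals all_analysis.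
From mathcomp Require Import complex.
Set Implicit Arguments. Unset Strict Implicit. Unset Printing Implicit Defensive.
Import Order.TTheory GRing.Theory Num.Theory.
Local Open Scope ring_scope.
Local Open Scope classical_set_scope.
Local Open Scope complex_scope.

Notation cpoly R D := (mpoly.mpoly D (R[i])).

Definition laplacian (R : realType) (D : nat) (P : cpoly R D) : cpoly R D :=
  \sum_(i < D) mpoly.mderiv i (mpoly.mderiv i P).

Definition harmonic_homog (R : realType) (D N : nat) (P : cpoly R D) : Prop :=
  P \is @mpoly.ishomog1 D (R[i]) N mpoly.mdeg /\ laplacian P = 0.

(* The polynomial function x |-> conj (Q x) (for real x), as a polynomial. *)
Definition cpoly_conj (R : realType) (D : nat) (Q : cpoly R D) : cpoly R D :=
  mpoly.map_mpoly (@conjc R) Q.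

Definition Xact (R : realType) (D : nat) (i j : 'I_D) (F : cpoly R D)
  : cpoly R D :=
  ('X_i : cpoly R D) * mpoly.mderiv j F
  - ('X_j : cpoly R D) * mpoly.mderiv i F.

Definition ceval (R : realType) (D : nat) (F : cpoly R D) (x : D.-tuple R) : R[i] :=
  mpoly.meval (fun i => (tnth x i)%:C) F.

Definition sphere (R : realType) (D : nat) : set (D.-tuple R) :=
  [set x | \sum_(i < D) (tnth x i) ^+ 2 = 1].

Definition mxact (R : realType) (D : nat) (g : 'M[R]_D) (x : D.-tuple R)
  : D.-tuple R :=
  [tuple \sum_(j < D) g i j * tnth x j | i < D].

Definition rot_inv_sphere_prob (R : realType) (D : nat)
  (mu : probability (D.-tuple R) R) : Prop :=
  mu (@sphere R D) = 1%E /\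
  forall g : 'M[R]_D, g *m g^T = 1%:M -> \det g = 1 ->
    forall A : set (D.-tuple R), measurable A ->
      mu (mxact g @^-1` A) = mu A.

Definition cintegral (R : realType) (D : nat) (mu : probability (D.-tuple R) R)
  (f : D.-tuple R -> R[i]) : R[i] :=
  (Rintegral mu setT (fun x => complex.Re (f x)))%:C
  + 'i * (Rintegral mu setT (fun x => complex.Im (f x)))%:C.

Definition Iint (R : realType) (D m : nat) (mu : probability (D.-tuple R) R)
  (F : 'I_m -> cpoly R D) : R[i] :=
  cintegral mu (fun x => \prod_(c < m) ceval (F c) x).

Definition args (R : realType) (D n p : nat)
  (P : 'I_n -> cpoly R D) (Q : 'I_p -> cpoly R D) : 'I_(n + p) -> cpoly R D :=
  fun c => match fintype.split c with
           | inl a => P a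
           | inr b => cpoly_conj (Q b)
           end.

Definition act2 (R : realType) (D m : nat) (F : 'I_m -> cpoly R D)
  (a b : 'I_m) (i j k l : 'I_D) : 'I_m -> cpoly R D :=
  fun c => if c == a then Xact i j (F c)
           else if c == b then Xact k l (F c) else F c.

Definition idx4 (D : nat) (i j k l : 'I_D) : 'I_4 -> 'I_D :=
  fun t => nth i [:: i; j; k; l] t.

From HB Require Import structures.
From mathcomp Require Import all_boot all_order all_algebra all_fingroup.
From mathcomp Require Import mpoly.
From mathcomp Require Import all_classical all_reals all_analysis.
From mathcomp Require Import complex.
From mathcomp Require Import ring lra.
From mathcomp Require Import measurable_realfun.
Set Implicit Arguments. Unset Strict Implicit. Unset Printing Implicit Defensive.
Import Order.TTheory GRing.Theory Num.Theory.
Local Open Scope ring_scope.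
Local Open Scope complex_scope.
Local Open Scope classical_set_scope.

(** Writing [X_ij F = x_i d_j F - x_j d_i F], at every point [x]
    the antisymmetrised integrand is [prod_(c <> a, b) F_c(x)] times the
    alternation over [(i, j, k, l)] of
    [(x_i d_j F_a - x_j d_i F_a) (x_k d_l F_b - x_l d_k F_b)].  After
    relabelling, every term of the expanded product is
    [x_i (d_j F_a) x_k (d_l F_b)], which is invariant under the odd
    transposition [i <-> k], so the alternation vanishes identically.  The
    integral then vanishes by linearity, which is available because
    polynomials are bounded on the sphere, a set of full measure. *)

Definition alt {C : pzRingType} {n : nat} (H : 'S_n -> C) : C :=
  \sum_(s : 'S_n) (-1) ^+ s * H s.

Lemma alt_mull (C : pzRingType) (n : nat) (t : 'S_n) (H : 'S_n -> C) :
  alt (fun s => H (t * s)%g) = (-1) ^+ t * alt H.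
Proof.
rewrite /alt (reindex_inj (mulgI t^-1)%g) mulr_sumr; apply: eq_bigr => s _.
by rewrite mulKVg odd_permM odd_permV signr_addb mulrA.
Qed.

Lemma alt_odd_invariant_eq0 (C : numDomainType) (n : nat) (t : 'S_n)
    (H : 'S_n -> C) :
  odd_perm t -> (forall s, H (t * s)%g = H s) -> alt H = 0.
Proof.
move=> odd_t Ht; have := alt_mull t H.
rewrite (funext Ht) odd_t expr1 mulN1r.
by move/eqP; rewrite -subr_eq0 opprK -mulr2n mulrn_eq0 => /eqP.
Qed.

Lemma alt_skew_products_eq0 (C : numDomainType) (U F G : 'I_4 -> C) :
  alt (fun s : 'S_4 => (U (s 0) * F (s 1) - U (s 1) * F (s 0)) *
                       (U (s 2) * G (s 3) - U (s 3) * G (s 2))) = 0.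
Proof.
pose A (s : 'S_4) := U (s 0) * F (s 1) * U (s 2) * G (s 3).
have altA : alt A = 0.
  apply: (@alt_odd_invariant_eq0 _ _ (tperm 0 2)); first by rewrite odd_tperm.
  move=> s; rewrite /A !permM !permE /=.
  by move: (U _) (U _) (F _) (G _) => u0 u2 f1 g3; ring.
pose t01 : 'S_4 := tperm 0 1; pose t23 : 'S_4 := tperm 2 3.
have altAt t : alt (fun s => A (t * s)%g) = 0 by rewrite alt_mull altA mulr0.
have altAtt : alt (fun s => A (t01 * (t23 * s))%g) = 0.
  by rewrite (alt_mull t23 (fun s => A (t01 * s)%g)) altAt mulr0.
rewrite /alt (eq_bigr (fun s : 'S_4 => (-1) ^+ s * A s - (-1) ^+ s * A (t01 * s)%g
    - (-1) ^+ s * A (t23 * s)%g + (-1) ^+ s * A (t01 * (t23 * s))%g)); last first.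
  move=> s _; rewrite /A !permM !permE /= -!mulrBr -mulrDr; congr (_ * _).
  move: (U (s 0)) (U (s 1)) (U (s 2)) (U (s 3)) (F (s 0)) (F (s 1)) (G (s 2)) (G (s 3)).
  by move=> u0 u1 u2 u3 f0 f1 g2 g3; ring.
by rewrite big_split !sumrB /= -!/(alt _) altA !altAt altAtt !subr0 addr0.
Qed.

Lemma ceval_Xact (R : realType) (D : nat) (i j : 'I_D) (G : cpoly R D) x :
  ceval (Xact i j G) x = (tnth x i)%:C * ceval (mpoly.mderiv j G) x
                         - (tnth x j)%:C * ceval (mpoly.mderiv i G) x.
Proof. by rewrite /ceval /Xact mevalB !mevalM !mevalXU. Qed.

Lemma alt_prod_ceval_act2_eq0 (R : realType) (D m : nat) (F : 'I_m -> cpoly R D)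
    (a b : 'I_m) (w : 'I_4 -> 'I_D) x :
  a != b ->
  alt (fun s : 'S_4 =>
    \prod_(c < m) ceval (act2 F a b (w (s 0)) (w (s 1)) (w (s 2)) (w (s 3)) c) x)
  = 0.
Proof.
move=> ab.
set r := \prod_(c < m | (c != a) && (c != b)) ceval (F c) x.
pose u t := (tnth x (w t))%:C.
pose fa t := ceval (mpoly.mderiv (w t) (F a)) x.
pose fb t := ceval (mpoly.mderiv (w t) (F b)) x.
have ba : (b == a) = false by rewrite eq_sym (negbTE ab).
rewrite /alt (eq_bigr (fun s : 'S_4 => (-1) ^+ s *
    ((u (s 0) * fa (s 1) - u (s 1) * fa (s 0)) *
     (u (s 2) * fb (s 3) - u (s 3) * fb (s 2))) * r)).
  by rewrite -big_distrl /= -/(alt _) alt_skew_products_eq0 mul0r.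
move=> s _; rewrite (bigD1 a) //= (bigD1 b) /=; last by rewrite ba.
rewrite /act2 eqxx ba eqxx !ceval_Xact -!mulrA; congr (_ * (_ * (_ * _))).
by apply: eq_bigr => c /andP[/negbTE -> /negbTE ->].
Qed.

Section ComplexParts.
Variable R : rcfType.
Local Notation Re := (@complex.Re R).
Local Notation Im := (@complex.Im R).

Lemma ReD (x y : R[i]) : Re (x + y) = Re x + Re y.
Proof. by case: x => ? ?; case: y. Qed.

Lemma ImD (x y : R[i]) : Im (x + y) = Im x + Im y.
Proof. by case: x => ? ?; case: y. Qed.

Lemma ReM (x y : R[i]) : Re (x * y) = Re x * Re y - Im x * Im y.
Proof. by case: x => ? ?; case: y. Qed.

Lemma ImM (x y : R[i]) : Im (x * y) = Re x * Im y + Im x * Re y.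
Proof. by case: x => ? ?; case: y => ? ? /=; rewrite addrC. Qed.

End ComplexParts.

Section SphereBounded.
Variables (R : realType) (D : nat).
Notation T := (D.-tuple R).
Local Notation Re := (@complex.Re R).
Local Notation Im := (@complex.Im R).

Definition sphere_bounded (f : T -> R[i]) : Prop :=
  [/\ measurable_fun setT (fun x => Re (f x)),
      measurable_fun setT (fun x => Im (f x)) &
      exists C, forall x, sphere x -> `|Re (f x)| <= C /\ `|Im (f x)| <= C].

Lemma measurable_sphere : measurable (@sphere R D).
Proof.
have mf : measurable_fun setT (fun x : T => \sum_(i < D) tnth x i ^+ 2).
  by apply: measurable_sum => i; apply: measurable_funX; exact: measurable_tnth.
by have := mf measurableT [set 1] (measurable_set1 1); rewrite setTI.
Qed.

Lemma sphere_norm_tnth_le1 (x : T) (i : 'I_D) : sphere x -> `|tnth x i| <= 1.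
Proof.
move=> Sx; have sq_le1 : tnth x i ^+ 2 <= 1.
  by rewrite -Sx (bigD1 i) //= lerDl sumr_ge0 // => ? _; exact: sqr_ge0.
by rewrite ler_norml; apply/andP; split; nra.
Qed.

Lemma sphere_bounded_cst (c : R[i]) : sphere_bounded (fun _ => c).
Proof.
split; [exact: measurable_cst | exact: measurable_cst |].
by exists (`|Re c| + `|Im c|) => x _; rewrite lerDl lerDr !normr_ge0.
Qed.

Lemma sphere_bounded_tnth (i : 'I_D) : sphere_bounded (fun x => (tnth x i)%:C).
Proof.
split; [exact: measurable_tnth | exact: measurable_cst |].
by exists 1 => x Sx; rewrite normr0 sphere_norm_tnth_le1.
Qed.

Lemma sphere_boundedD f g : sphere_bounded f -> sphere_bounded g ->
  sphere_bounded (fun x => f x + g x).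
Proof.
move=> [mRf mIf [Cf bf]] [mRg mIg [Cg bg]]; split.
- by under eq_fun do rewrite ReD; exact: measurable_funD.
- by under eq_fun do rewrite ImD; exact: measurable_funD.
exists (Cf + Cg) => x Sx; have [? ?] := bf x Sx; have [? ?] := bg x Sx.
by rewrite ReD ImD; split; apply: le_trans (ler_normD _ _) _; exact: lerD.
Qed.

Lemma sphere_boundedM f g : sphere_bounded f -> sphere_bounded g ->
  sphere_bounded (fun x => f x * g x).
Proof.
move=> [mRf mIf [Cf bf]] [mRg mIg [Cg bg]]; split.
- by under eq_fun do rewrite ReM; apply: measurable_funB; exact: measurable_funM.
- by under eq_fun do rewrite ImM; apply: measurable_funD; exact: measurable_funM.
exists (Cf * Cg + Cf * Cg) => x Sx; have [? ?] := bf x Sx; have [? ?] := bg x Sx.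
rewrite ReM ImM; split; [apply: le_trans (ler_normB _ _) _ |
                        apply: le_trans (ler_normD _ _) _];
  by rewrite !normrM; apply: lerD; apply: ler_pM.
Qed.

Lemma sphere_bounded_sum (I : Type) (r : seq I) (h : I -> T -> R[i]) :
  (forall i, sphere_bounded (h i)) -> sphere_bounded (fun x => \sum_(i <- r) h i x).
Proof.
move=> bh; elim: r => [|i r IHr].
  by under eq_fun do rewrite big_nil; exact: sphere_bounded_cst.
by under eq_fun do rewrite big_cons; exact: sphere_boundedD.
Qed.

Lemma sphere_bounded_prod (I : Type) (r : seq I) (h : I -> T -> R[i]) :
  (forall i, sphere_bounded (h i)) -> sphere_bounded (fun x => \prod_(i <- r) h i x).
Proof.
move=> bh; elim: r => [|i r IHr].
  by under eq_fun do rewrite big_nil; exact: sphere_bounded_cst.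
by under eq_fun do rewrite big_cons; exact: sphere_boundedM.
Qed.

Lemma sphere_boundedX f n : sphere_bounded f -> sphere_bounded (fun x => f x ^+ n).
Proof.
move=> bf; elim: n => [|n IHn].
  by under eq_fun do rewrite expr0; exact: sphere_bounded_cst.
by under eq_fun do rewrite exprS; exact: sphere_boundedM.
Qed.

Lemma sphere_bounded_ceval (G : cpoly R D) : sphere_bounded (ceval G).
Proof.
rewrite /ceval; under eq_fun do rewrite mevalE.
apply: sphere_bounded_sum => m; apply: sphere_boundedM; first exact: sphere_bounded_cst.
by apply: sphere_bounded_prod => i; apply: sphere_boundedX; exact: sphere_bounded_tnth.
Qed.

End SphereBounded.

Section SphereIntegral.
Variables (R : realType) (D : nat) (mu : probability (D.-tuple R) R).
Notation T := (D.-tuple R).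
Local Notation Re := (@complex.Re R).
Local Notation Im := (@complex.Im R).
Hypothesis mu_sphere : mu (@sphere R D) = 1%E.

Lemma integrable_bounded_on_sphere (g : T -> R) : measurable_fun setT g ->
  (exists C, forall x, sphere x -> `|g x| <= C) -> mu.-integrable setT (EFin \o g).
Proof.
move=> mg [C bg]; have mS := @measurable_sphere R D.
have mu_notS : mu (~` (@sphere R D)) = 0%E.
  by rewrite probability_setC // mu_sphere subee.
apply/(negligible_integrable (measurableC mS) measurableT _ mu_notS).
  exact/measurable_EFinP.
rewrite setTD setCK; apply: measurable_bounded_integrable => //.
- by rewrite [X in (X < _)%E](_ : _ = 1%E) ?ltry.
- exact: measurable_funS mg.
exists C; split; first exact: num_real.
by move=> M /ltW CM x Sx; exact: le_trans (bg x Sx) CM.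
Qed.

Lemma integrable_Re f :
  sphere_bounded f -> mu.-integrable setT (EFin \o (fun x => Re (f x))).
Proof.
by case=> mRf _ [C bf]; apply: integrable_bounded_on_sphere => //; exists C => x /bf[].
Qed.

Lemma integrable_Im f :
  sphere_bounded f -> mu.-integrable setT (EFin \o (fun x => Im (f x))).
Proof.
by case=> _ mIf [C bf]; apply: integrable_bounded_on_sphere => //; exists C => x /bf[].
Qed.

Lemma integrable_EFinZl (a : R) (h : T -> R) : mu.-integrable setT (EFin \o h) ->
  mu.-integrable setT (EFin \o (fun x => a * h x)).
Proof. by move=> ih; apply: eq_integrable (integrableZl measurableT a ih). Qed.

Lemma cintegral0 : cintegral mu (fun _ => 0) = 0.
Proof. by rewrite /cintegral !Rintegral_cst // !mul0r mulr0 addr0. Qed.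

Lemma cintegralD f g : sphere_bounded f -> sphere_bounded g ->
  cintegral mu (fun x => f x + g x) = cintegral mu f + cintegral mu g.
Proof.
move=> bf bg; rewrite /cintegral.
under eq_Rintegral do rewrite ReD; under [X in (_ * X%:C)%R]eq_Rintegral do rewrite ImD.
rewrite !RintegralD //; try exact: integrable_Re; try exact: integrable_Im.
by rewrite !rmorphD /=; ring.
Qed.

Lemma cintegralZ c f : sphere_bounded f ->
  cintegral mu (fun x => c * f x) = c * cintegral mu f.
Proof.
move=> bf; rewrite /cintegral.
under eq_Rintegral do rewrite ReM; under [X in (_ * X%:C)%R]eq_Rintegral do rewrite ImM.
have [iR iI] := (integrable_Re bf, integrable_Im bf).
rewrite RintegralB ?RintegralD ?RintegralZl //; try exact: integrable_EFinZl.
by case: c => a b; apply/eqP; rewrite eq_complex /=; apply/andP; split; apply/eqP; ring.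
Qed.

Lemma cintegral_sum (I : Type) (r : seq I) (c : I -> R[i]) (h : I -> T -> R[i]) :
  (forall i, sphere_bounded (h i)) ->
  cintegral mu (fun x => \sum_(i <- r) c i * h i x) =
  \sum_(i <- r) c i * cintegral mu (h i).
Proof.
move=> bh; have bch i : sphere_bounded (fun x => c i * h i x).
  exact: sphere_boundedM (sphere_bounded_cst D (c i)) (bh i).
elim: r => [|i r IHr].
  by under eq_fun do rewrite big_nil; rewrite big_nil cintegral0.
under eq_fun do rewrite big_cons.
by rewrite cintegralD ?cintegralZ ?big_cons ?IHr //; exact: sphere_bounded_sum.
Qed.

End SphereIntegral.

Theorem theorem3 (R : realType) (D n p : nat)
  (N : 'I_n -> nat) (M : 'I_p -> nat)
  (P : 'I_n -> cpoly R D) (Q : 'I_p -> cpoly R D)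
  (mu : probability (D.-tuple R) R) :
  (3 <= D)%N -> (2 <= n + p)%N ->
  rot_inv_sphere_prob mu ->
  (forall a, harmonic_homog (N a) (P a)) ->
  (forall b, harmonic_homog (M b) (Q b)) ->
  forall (a b : 'I_(n + p)), a != b ->
  forall i j k l : 'I_D,
    \sum_(s : 'S_4)
      (-1) ^+ s *
      Iint mu (act2 (args P Q) a b
                 (idx4 i j k l (s 0)) (idx4 i j k l (s 1))
                 (idx4 i j k l (s 2)) (idx4 i j k l (s 3))) = 0.
Proof.
move=> _ _ [mu_sphere _] _ _ a b ab i j k l.
rewrite /Iint -cintegral_sum //; last first.
  by move=> s; apply: sphere_bounded_prod => c; exact: sphere_bounded_ceval.
rewrite -[RHS](cintegral0 mu); congr cintegral; apply: funext => x.
exact: alt_prod_ceval_act2_eq0.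
Qed.
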